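(* Let $p^*\in(0,1)$ be the solution of $p^{(2-p)/(1-p)}=(1-p)^2$ and $\tau^*=(p^* )^{1/(1-p^* )}$. Let $\varepsilon\in[0,1)$ and $p=(1-\varepsilon)p^*$. Then for every integer $\ell\ge0$, \[ \int_{\tau^*}^1\frac{(1-(1-\varepsilon)t)^\ell}{t^{p^*}}\,dt\ \ge\ (1-p)^\ell . \] *)

From Stdlib Require Import Reals.
From Coquelicot Require Import Coquelicot.
Open Scope R_scope.

Definition is_pstar (p : R) : Prop :=
  0 < p < 1 /\ Rpower p ((2 - p) / (1 - p)) = (1 - p) ^ 2.

Definition tau_of (p : R) : R := Rpower p (1 / (1 - p)).

(* The weight t^(-p) with p = p* turns [tau*, 1] into a probability space: by the
   defining equations of p* and tau* it has total mass 1 and mean p.  The integrand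
   is the l-th power of the affine function 1 - (1 - eps) t, so Jensen's inequality
   for the convex map x |-> x^l bounds the integral below by (1 - (1 - eps) p)^l; for
   an affine argument, Jensen is just the tangent-line inequality of x^l at
   1 - (1 - eps) p integrated against the weight. *)
From Stdlib Require Import Reals Lra.
From Coquelicot Require Import Coquelicot.
Open Scope R_scope.

Lemma pow_ge_tangent (x c : R) (n : nat) : 0 <= x -> 0 <= c ->
  c ^ n + INR n * c ^ pred n * (x - c) <= x ^ n.
Proof.
intros Hx Hc; destruct n as [|n]; [simpl; lra|]; simpl pred.
induction n as [|n IH]; [simpl; lra|].
assert (Hn : 0 <= INR (S n)) by apply pos_INR.
assert (Hcn : 0 <= c ^ n) by (apply pow_le; lra).
assert (Hsq : 0 <= INR (S n) * c ^ n * ((x - c) * (x - c))).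
{ apply Rmult_le_pos; [nra | apply Rle_0_sqr]. }
assert (Hstep : x * (c ^ S n + INR (S n) * c ^ n * (x - c)) <= x * x ^ S n).
{ apply Rmult_le_compat_l; lra. }
rewrite S_INR; simpl in *; nra.
Qed.

Lemma is_RInt_Rpower (a lo hi : R) : 0 < lo -> 0 < hi -> a + 1 <> 0 ->
  is_RInt (fun t => Rpower t a) lo hi
    ((Rpower hi (a + 1) - Rpower lo (a + 1)) / (a + 1)).
Proof.
intros Hlo Hhi Ha.
assert (Hpos : forall x, Rmin lo hi <= x <= Rmax lo hi -> 0 < x).
{ intros x [Hx _]; apply (Rlt_le_trans _ (Rmin lo hi)); [apply Rmin_glb_lt|]; lra. }
replace ((Rpower hi (a + 1) - Rpower lo (a + 1)) / (a + 1)) with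
  (minus (Rpower hi (a + 1) / (a + 1)) (Rpower lo (a + 1) / (a + 1)))
  by (unfold minus, plus, opp; simpl; field; exact Ha).
apply (is_RInt_derive (fun t => Rpower t (a + 1) / (a + 1))).
- intros x Hx; specialize (Hpos x Hx).
  unfold Rpower; auto_derive; [lra|].
  replace ((a + 1) * ln x) with (a * ln x + ln x) by ring.
  rewrite exp_plus, exp_ln by lra.
  field; lra.
- intros x Hx; specialize (Hpos x Hx).
  apply (ex_derive_continuous (fun t => Rpower t a)).
  unfold Rpower; auto_derive; lra.
Qed.

Lemma RInt_pow_affine_weight_ge (w : R -> R) (lo hi m u v : R) (n : nat) :
  lo <= hi ->
  (forall t, lo < t < hi -> 0 <= w t) ->
  (forall t, lo < t < hi -> 0 <= u - v * t) ->
  0 <= u - v * m ->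
  is_RInt w lo hi 1 ->
  is_RInt (fun t => t * w t) lo hi m ->
  ex_RInt (fun t => (u - v * t) ^ n * w t) lo hi ->
  (u - v * m) ^ n <= RInt (fun t => (u - v * t) ^ n * w t) lo hi.
Proof.
intros Hlo Hw Hpos Hc Hmass Hmean Hint.
set (c := u - v * m).
set (slope := INR n * c ^ pred n * v).
set (tangent := fun t => (c ^ n + slope * m) * w t - slope * (t * w t)).
assert (Htangent : is_RInt tangent lo hi (c ^ n)).
{ replace (c ^ n) with (minus (scal (c ^ n + slope * m) 1) (scal slope m))
    by (unfold minus, plus, opp, scal; simpl; unfold mult; simpl; ring).
  exact (is_RInt_minus _ _ _ _ _ _ (is_RInt_scal _ _ _ _ _ Hmass)
                                   (is_RInt_scal _ _ _ _ _ Hmean)). }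
rewrite <- (is_RInt_unique _ _ _ _ Htangent).
apply RInt_le; [exact Hlo | eexists; exact Htangent | exact Hint |].
intros t Ht; unfold tangent.
replace ((c ^ n + slope * m) * w t - slope * (t * w t))
  with ((c ^ n + INR n * c ^ pred n * ((u - v * t) - c)) * w t)
  by (unfold slope, c; ring).
apply Rmult_le_compat_r; [now apply Hw|].
apply pow_ge_tangent; [now apply Hpos | exact Hc].
Qed.

Lemma Rpower_1_l (y : R) : Rpower 1 y = 1.
Proof. unfold Rpower; rewrite ln_1, Rmult_0_r; apply exp_0. Qed.

Lemma tau_of_pos (p : R) : 0 < tau_of p.
Proof. apply exp_pos. Qed.

Lemma tau_of_le_1 (p : R) : 0 < p < 1 -> tau_of p <= 1.
Proof.
intros Hp; unfold tau_of.
rewrite <- (Rpower_1_l (1 / (1 - p))) at 3.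
apply Rle_Rpower_l; [apply Rlt_le, Rdiv_lt_0_compat|]; lra.
Qed.

Lemma Rpower_tau_of_1_sub (p : R) : p < 1 -> 0 < p ->
  Rpower (tau_of p) (1 - p) = p.
Proof.
intros Hp1 Hp0; unfold tau_of; rewrite Rpower_mult.
replace (1 / (1 - p) * (1 - p)) with 1 by (field; lra).
now apply Rpower_1.
Qed.

Lemma Rpower_tau_of_2_sub (p : R) : is_pstar p ->
  Rpower (tau_of p) (2 - p) = (1 - p) ^ 2.
Proof.
intros [Hp Hpstar]; unfold tau_of; rewrite Rpower_mult, <- Hpstar.
f_equal; field; lra.
Qed.

Lemma pstar_weight_mass (p : R) : 0 < p < 1 ->
  is_RInt (fun t => Rpower t (- p)) (tau_of p) 1 1.
Proof.
intros Hp.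
assert (Hmass : (Rpower 1 (- p + 1) - Rpower (tau_of p) (- p + 1)) / (- p + 1) = 1).
{ replace (- p + 1) with (1 - p) by ring.
  rewrite Rpower_tau_of_1_sub, Rpower_1_l by lra; field; lra. }
pose proof (is_RInt_Rpower (- p) (tau_of p) 1 (tau_of_pos p) Rlt_0_1 ltac:(lra)) as H.
now rewrite Hmass in H.
Qed.

Lemma pstar_weight_mean (p : R) : is_pstar p ->
  is_RInt (fun t => t * Rpower t (- p)) (tau_of p) 1 p.
Proof.
intros Hps; pose proof (proj1 Hps) as Hp.
assert (Hmean : (Rpower 1 (1 - p + 1) - Rpower (tau_of p) (1 - p + 1)) / (1 - p + 1) = p).
{ replace (1 - p + 1) with (2 - p) by ring.
  rewrite Rpower_tau_of_2_sub, Rpower_1_l by assumption; field; lra. }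
pose proof (is_RInt_Rpower (1 - p) (tau_of p) 1 (tau_of_pos p) Rlt_0_1 ltac:(lra)) as H.
rewrite Hmean in H; eapply is_RInt_ext; [|exact H].
intros t [Ht _].
assert (Htpos : 0 < t).
{ apply (Rle_lt_trans _ (Rmin (tau_of p) 1)); [|exact Ht].
  apply Rlt_le, Rmin_pos; [apply tau_of_pos | lra]. }
rewrite <- (Rpower_1 t) at 2 by exact Htpos.
rewrite <- Rpower_plus; f_equal; ring.
Qed.

Theorem mainTheorem12 (pstar eps : R) (l : nat) :
  is_pstar pstar -> 0 <= eps < 1 ->
  RInt (fun t => (1 - (1 - eps) * t) ^ l / Rpower t pstar) (tau_of pstar) 1
    >= (1 - (1 - eps) * pstar) ^ l.
Proof.
intros Hps Heps; pose proof (proj1 Hps) as Hp.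
pose proof (tau_of_pos pstar) as Htau0; pose proof (tau_of_le_1 pstar Hp) as Htau1.
rewrite (RInt_ext _ (fun t => (1 - (1 - eps) * t) ^ l * Rpower t (- pstar))).
2:{ intros t [Ht _]; rewrite Rmin_left in Ht by exact Htau1.
    now rewrite Rpower_Ropp. }
apply Rle_ge, RInt_pow_affine_weight_ge.
- exact Htau1.
- intros t _; apply Rlt_le, exp_pos.
- intros t Ht; nra.
- nra.
- now apply pstar_weight_mass.
- now apply pstar_weight_mean.
- apply (ex_RInt_continuous (V := R_CompleteNormedModule)).
  intros t Ht; rewrite Rmin_left, Rmax_right in Ht by exact Htau1.
  apply (ex_derive_continuous (fun t => (1 - (1 - eps) * t) ^ l * Rpower t (- pstar))).
  unfold Rpower; auto_derive; lra.
Qed.
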